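(* Let $X$ be a normal ballean and $f:X\to Y$ an open macro-uniform map onto a ballean $Y$ that admits a bornologous section $s:Y\to X$ (i.e. $f(s(y))=y$ for all $y\in Y$). Then $Y$ is normal.
   Context: A ballean is a pair $(X,\mathcal E_X)$ where $X$ is a set and $\mathcal E_X$ is a family of subsets of $X\times X$ (entourages) such that: each $E\in\mathcal E_X$ contains the diagonal; for any $E,F\in\mathcal E_X$ there is $D\in\mathcal E_X$ with $E\circ F^{-1}\subset D$; and $\bigcup\mathcal E_X=X\times X$. For $E\in\mathcal E_X$, $x\in X$, $A\subset X$: $E[x]=\{y:(x,y)\in E\}$, $E[A]=\bigcup_{a\in A}E[a]$. $B\subset X$ is bounded if $B\subset E[x]$ for some $E\in\mathcal E_X$, $x\in X$; $\mathcal B_X$ is the family of bounded sets. Sets $A,B$ are asymptotically disjoint if $E[A]\cap E[B]\in\mathcal B_X$ for all $E\in\mathcal E_X$; $U$ is an asymptotic neighborhood of $A$ if $E[A]\setminus U\in\mathcal B_X$ for all $E$; $X$ is normal if any two asymptotically disjoint sets have disjoint asymptotic neighborhoods. A map $f:X\to Y$ is macro-uniform if for every $E_X\in\mathcal E_X$ there is $E_Y\in\mathcal E_Y$ with $f(E_X[x])\subset E_Y[f(x)]$ for all $x\in X$; open if for every $E_Y\in\mathcal E_Y$ there is $E_X\in\mathcal E_X$ with $f(E_X[x])\supset E_Y[f(x)]$ for all $x\in X$. A map $s:Y\to X$ is bornologous if $s(B)$ is bounded in $X$ for every bounded $B\subset Y$. *)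

From Stdlib Require Import Classical.

Set Implicit Arguments.

Definition rel (X : Type) := X -> X -> Prop.

Definition rcomp (X : Type) (E F : rel X) : rel X :=
  fun x z => exists y, F x y /\ E y z.
Definition rinv (X : Type) (F : rel X) : rel X := fun x y => F y x.
Definition rsub (X : Type) (E F : rel X) : Prop := forall x y, E x y -> F x y.

Record ballean := Ballean {
  bcarrier :> Type;
  entourage : rel bcarrier -> Prop;
  ent_diag : forall E, entourage E -> forall x, E x x;
  ent_comp : forall E F, entourage E -> entourage F ->
      exists D, entourage D /\ rsub (rcomp E (rinv F)) D;
  ent_cover : forall x y : bcarrier, exists E, entourage E /\ E x y
}.

Definition ball (X : ballean) (E : rel X) (x : X) : X -> Prop := fun y => E x y.
Definition ballS (X : ballean) (E : rel X) (A : X -> Prop) : X -> Prop :=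
  fun y => exists a, A a /\ E a y.

Definition subset (X : Type) (A B : X -> Prop) : Prop := forall x, A x -> B x.

Definition bounded (X : ballean) (B : X -> Prop) : Prop :=
  exists E x, entourage X E /\ subset B (ball X E x).

Definition asym_disjoint (X : ballean) (A B : X -> Prop) : Prop :=
  forall E, entourage X E ->
    bounded X (fun y => ballS X E A y /\ ballS X E B y).

Definition asym_nbhd (X : ballean) (U A : X -> Prop) : Prop :=
  forall E, entourage X E -> bounded X (fun y => ballS X E A y /\ ~ U y).

Definition normal (X : ballean) : Prop :=
  forall A B : X -> Prop, asym_disjoint X A B ->
    exists U V : X -> Prop, asym_nbhd X U A /\ asym_nbhd X V B /\
      (forall x, ~ (U x /\ V x)).

Definition macro_uniform (X Y : ballean) (f : X -> Y) : Prop :=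
  forall EX, entourage X EX -> exists EY, entourage Y EY /\
    forall x y, EX x y -> EY (f x) (f y).

Definition open_map (X Y : ballean) (f : X -> Y) : Prop :=
  forall EY, entourage Y EY -> exists EX, entourage X EX /\
    forall x y', EY (f x) y' -> exists y, EX x y /\ f y = y'.

Definition bornologous (Y X : ballean) (s : Y -> X) : Prop :=
  forall B : Y -> Prop, bounded Y B -> bounded X (fun x => exists y, B y /\ s y = x).

(* Pull the asymptotically disjoint pair A, B of Y back to the pair s(A), f^{-1}(B) of X:
   macro-uniformity of f maps their E-neighbourhoods into neighbourhoods of A and B, and
   the bornologous section brings the bounded overlap back to X.  Normality of X yields
   disjoint asymptotic neighbourhoods U, V there, and openness of f shows that the image
   f(U) and the set of points whose whole fibre lies in V are asymptotic neighbourhoods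
   of A and B in Y; they are disjoint because a point of f(U) has a fibre point in U. *)

From Stdlib Require Import Classical.

Definition image {X Y : Type} (f : X -> Y) (A : X -> Prop) : Y -> Prop :=
  fun y => exists x, A x /\ f x = y.

Definition preimage {X Y : Type} (f : X -> Y) (B : Y -> Prop) : X -> Prop :=
  fun x => B (f x).

Definition dual_image {X Y : Type} (f : X -> Y) (V : X -> Prop) : Y -> Prop :=
  fun y => forall x, f x = y -> V x.

Section Entourages.

Variable X : ballean.

Lemma ent_inv (E : rel X) : entourage X E ->
  exists D, entourage X D /\ forall x y, E x y -> D y x.
Proof.
  intros HE. destruct (ent_comp X E E HE HE) as [D [HD HED]].
  exists D; split; [exact HD|].
  intros x y Hxy. apply HED. exists x. split; [exact Hxy | apply (ent_diag X E HE)].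
Qed.

Lemma ent_trans (E F : rel X) : entourage X E -> entourage X F ->
  exists D, entourage X D /\ forall x y z, E x y -> F y z -> D x z.
Proof.
  intros HE HF. destruct (ent_inv E HE) as [Ei [HEi HEEi]].
  destruct (ent_comp X F Ei HF HEi) as [D [HD HFD]].
  exists D; split; [exact HD|].
  intros x y z Hxy Hyz. apply HFD. exists y. split; [apply HEEi; exact Hxy | exact Hyz].
Qed.

Lemma bounded_subset (P Q : X -> Prop) : subset P Q -> bounded X Q -> bounded X P.
Proof.
  intros HPQ [E [x [HE HQ]]]. exists E, x. split; [exact HE|].
  intros y Py. apply HQ, HPQ, Py.
Qed.

Lemma bounded_ballS (E : rel X) (P : X -> Prop) :
  entourage X E -> bounded X P -> bounded X (ballS X E P).
Proof.
  intros HE [E0 [x0 [HE0 HP]]].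
  destruct (ent_trans E0 E HE0 HE) as [D [HD HE0ED]].
  exists D, x0. split; [exact HD|].
  intros y [p [Pp Hpy]]. apply (HE0ED x0 p y); [apply HP, Pp | exact Hpy].
Qed.

Lemma asym_nbhd_antitone (U A1 A2 : X -> Prop) :
  subset A1 A2 -> asym_nbhd X U A2 -> asym_nbhd X U A1.
Proof.
  intros HA HU E HE. apply bounded_subset with (2 := HU E HE).
  intros y [[a [A1a Hay]] HnU]. split; [exists a; split; [apply HA, A1a | exact Hay] | exact HnU].
Qed.

End Entourages.

Section MacroUniformMaps.

Variables X Y : ballean.
Variable f : X -> Y.
Hypothesis f_macro_uniform : macro_uniform X Y f.

Lemma bounded_image (P : X -> Prop) : bounded X P -> bounded Y (image f P).
Proof.
  intros [E [x0 [HE HP]]]. destruct (f_macro_uniform E HE) as [EY [HEY HfE]].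
  exists EY, (f x0). split; [exact HEY|].
  intros y [x [Px <-]]. apply HfE, HP, Px.
Qed.

Lemma asym_disjoint_section (s : Y -> X) (A B : Y -> Prop) :
  bornologous Y X s -> (forall y, f (s y) = y) ->
  asym_disjoint Y A B -> asym_disjoint X (image s A) (preimage f B).
Proof.
  intros Hs Hfs HAB EX HEX.
  destruct (f_macro_uniform EX HEX) as [EY [HEY HfE]].
  destruct (ent_inv Y EY HEY) as [Di [HDi HEYDi]].
  set (K := fun y => ballS Y EY A y /\ ballS Y EY B y).
  assert (HK : bounded Y (ballS Y Di K)) by exact (bounded_ballS Y Di K HDi (HAB EY HEY)).
  apply (bounded_subset X _ (ballS X EX (image s (ballS Y Di K)))).
  - intros z [[x [[a [Aa <-]] Hsaz]] [b [Bb Hbz]]].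
    assert (Hafz : EY a (f z)) by (rewrite <- (Hfs a); apply HfE, Hsaz).
    exists (s a). split; [|exact Hsaz].
    exists a. split; [|reflexivity].
    exists (f z). split; [|apply HEYDi, Hafz].
    split; [exists a | exists (f b)]; split; auto.
  - apply bounded_ballS; [exact HEX|]. exact (Hs _ HK).
Qed.

Hypothesis f_open : open_map X Y f.

Lemma asym_nbhd_image (U A : X -> Prop) :
  asym_nbhd X U A -> asym_nbhd Y (image f U) (image f A).
Proof.
  intros HU EY HEY. destruct (f_open EY HEY) as [EX [HEX Hlift]].
  apply (bounded_subset Y _ (image f (fun x => ballS X EX A x /\ ~ U x))).
  - intros y [[y' [[a [Aa <-]] Hay]] HnU].
    destruct (Hlift a y Hay) as [x [Hax Hxy]].
    exists x. split; [|exact Hxy]. split.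
    + exists a. split; assumption.
    + intros Ux. apply HnU. exists x. split; assumption.
  - apply bounded_image, HU, HEX.
Qed.

Lemma asym_nbhd_dual_image (V : X -> Prop) (B : Y -> Prop) :
  asym_nbhd X V (preimage f B) -> asym_nbhd Y (dual_image f V) B.
Proof.
  intros HV EY HEY.
  destruct (ent_inv Y EY HEY) as [Di [HDi HEYDi]].
  destruct (f_open Di HDi) as [EX [HEX Hlift]].
  destruct (ent_inv X EX HEX) as [Ei [HEi HEXEi]].
  apply (bounded_subset Y _ (image f (fun x => ballS X Ei (preimage f B) x /\ ~ V x))).
  - intros y [[b [Bb Hby]] HnV].
    destruct (not_all_ex_not _ _ HnV) as [x Hx].
    destruct (imply_to_and _ _ Hx) as [Hxy HnVx].
    exists x. split; [|exact Hxy]. split; [|exact HnVx].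
    subst y. destruct (Hlift x b (HEYDi _ _ Hby)) as [z [Hxz Hzb]].
    exists z. split; [unfold preimage; rewrite Hzb; exact Bb | apply HEXEi, Hxz].
  - apply bounded_image, HV, HEi.
Qed.

End MacroUniformMaps.

Theorem proposition2p5 (X Y : ballean) (f : X -> Y) (s : Y -> X) :
  normal X ->
  macro_uniform X Y f ->
  open_map X Y f ->
  (forall y : Y, exists x : X, f x = y) ->
  bornologous Y X s ->
  (forall y : Y, f (s y) = y) ->
  normal Y.
Proof.
  intros HnX Hf Hopen _ Hs Hfs A B HAB.
  destruct (HnX _ _ (asym_disjoint_section X Y f Hf s A B Hs Hfs HAB))
    as [U [V [HU [HV HUV]]]].
  exists (image f U), (dual_image f V). split; [|split].
  - apply (asym_nbhd_antitone Y _ _ (image f (image s A))).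
    + intros a Aa. exists (s a). split; [exists a; split; auto | apply Hfs].
    + exact (asym_nbhd_image X Y f Hf Hopen U _ HU).
  - exact (asym_nbhd_dual_image X Y f Hf Hopen V B HV).
  - intros y [[x [Ux <-]] HVy]. exact (HUV x (conj Ux (HVy x eq_refl))).
Qed.
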